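(* Let $G=(V,E)$ be a finite connected graph with nodes $V=\{v_1,\dots,v_n\}$, let $S=\{v_1,\dots,v_\sigma\}$ with $\sigma\ge1$ be the set of sources, and assume the non-sources are ordered so that $\deg_G(v_{\sigma+1})\ge\deg_G(v_{\sigma+2})\ge\cdots\ge\deg_G(v_n)$. Fix $t\in\mathbb{Z}_{\ge 0}$. Consider all tuples $(V_0,\dots,V_t,\pi)$ with $V_0\subseteq V_1\subseteq\cdots\subseteq V_t\subseteq V$ and $\pi:V\setminus S\to V$ satisfying: $V_0=S$; for all $k=1,\dots,t$ and all $v\in V_k\setminus S$, $\pi(v)\in V_{k-1}$; for all $k=1,\dots,t$ and all $u,v\in V_k\setminus V_{k-1}$, $\pi(u)=\pi(v)$ only if $u=v$; and for all $v\in V$, $|\pi^{-1}(v)|\le \deg_G(v)-\delta_{v\in V\setminus S}$ (here $\pi$ need not map along edges of $G$). Then the maximum of $|V_t|$ over all such tuples is attained by a tuple satisfying, for every $k=1,\dots,t$, $$\min\{i: v_i\in V_k\setminus V_{k-1}\}>\max\{i: v_i\in V_{k-1}\}.$$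
   Context: $\deg_G(v)$ is the degree of $v$ in $G$; $\delta_p=1$ if proposition $p$ is true and $0$ otherwise; $\pi^{-1}(v)=\{u\in V\setminus S:\pi(u)=v\}$. The minimum over an empty set is taken to be $+\infty$. *)

From mathcomp Require Import all_boot.
Set Implicit Arguments. Unset Strict Implicit. Unset Printing Implicit Defensive.

(* Nodes v_1,...,v_n are represented by 'I_n : node i stands for v_(i+1).
   A finite simple graph is a symmetric irreflexive relation on 'I_n. *)
Definition simple_graph n (e : rel 'I_n) : Prop :=
  symmetric e /\ irreflexive e.

Definition connected_graph n (e : rel 'I_n) : Prop :=
  forall x y : 'I_n, connect e x y.

Definition deg n (e : rel 'I_n) (v : 'I_n) : nat := #|[set u | e v u]|.

Definition sources n (sigma : nat) : {set 'I_n} := [set i : 'I_n | i < sigma].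

(* |pi^{-1}(v)| where pi^{-1}(v) = {u in V \ S : pi u = v};
   pi is a total function on 'I_n but only its values on V \ S matter. *)
Definition preim_count n sigma (pi : 'I_n -> 'I_n) (v : 'I_n) : nat :=
  #|[set u | (u \notin sources n sigma) && (pi u == v)]|.

Definition admissible n sigma t (e : rel 'I_n)
    (Vs : nat -> {set 'I_n}) (pi : 'I_n -> 'I_n) : Prop :=
  [/\ Vs 0 = sources n sigma,
      (forall k, 0 < k <= t -> Vs k.-1 \subset Vs k),
      (forall k, 0 < k <= t -> forall v,
          v \in Vs k :\: sources n sigma -> pi v \in Vs k.-1),
      (forall k, 0 < k <= t -> forall u v,
          u \in Vs k :\: Vs k.-1 -> v \in Vs k :\: Vs k.-1 ->
          pi u = pi v -> u = v) &
      (* |pi^{-1}(v)| <= deg(v) - delta_{v in V\S}, written additively *)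
      (forall v, preim_count sigma pi v + (v \notin sources n sigma) <= deg e v)].

(* min{i : v_i in V_k \ V_(k-1)} > max{i : v_i in V_(k-1)} for all k = 1..t,
   with min over the empty set = +oo: every index in V_k \ V_(k-1) exceeds
   every index in V_(k-1). *)
Definition layered n t (Vs : nat -> {set 'I_n}) : Prop :=
  forall k, 0 < k <= t ->
    forall i j : 'I_n, i \in Vs k :\: Vs k.-1 -> j \in Vs k.-1 -> j < i.

From mathcomp Require Import all_boot perm zify.
From Stdlib Require Import Classical.
Set Implicit Arguments. Unset Strict Implicit. Unset Printing Implicit Defensive.

(* Among admissible tuples with |V_t| maximal, take one minimising the
   potential sum_(k <= t) sum_(v_i in V_k) i.  If the ordering failed at some
   k, with v_i new in V_k, v_j in V_(k-1) and i < j, exchange the labels of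
   v_i and v_j, i.e. conjugate the whole tuple by the transposition (i j).
   This keeps |V_t| and lowers the potential; the only constraint that can
   break is the capacity of v_j, which now carries the children of v_i while
   deg v_j <= deg v_i.  Its surplus children are handed over to v_i, choosing
   ones that share no layer with a child of v_i; there are enough of them
   because those that do share a layer inject into the children of v_i.
   Admissible tuples exist: take V_k = S and let pi follow a breadth-first
   search from S. *)

Lemma ex_argmin (T : Type) (P : T -> Prop) (f : T -> nat) :
  (exists x, P x) -> exists2 x, P x & forall y, P y -> f x <= f y.
Proof.
move=> [x Px]; have [N fxN] : exists N, f x < N by exists (f x).+1.
elim: N x Px fxN => // N IH x Px fxN.
case: (classic (exists2 y, P y & f y < f x)) => [[y Py fyx]|min_x].
  by apply: (IH y Py); apply: leq_trans fyx _.
by exists x => // y Py; rewrite leqNgt; apply/negP => fyx; apply: min_x; exists y.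
Qed.

Section Chain.
Variables (T : finType) (t : nat) (V : nat -> {set T}).
Hypothesis V_incr : forall k, 0 < k <= t -> V k.-1 \subset V k.

Lemma chain_subset a b : a <= b <= t -> V a \subset V b.
Proof.
elim: b => [|b IH]; first by rewrite leqn0 => /andP[/eqP->].
move=> /andP[]; rewrite leq_eqVlt => /orP[/eqP-> //|ab] bt.
have /subset_trans : V a \subset V b by apply: IH; lia.
by apply; apply: (@V_incr b.+1); lia.
Qed.

Lemma new_notin_base m x : 0 < m <= t -> x \in V m :\: V m.-1 -> x \notin V 0.
Proof. by move=> mt /setDP[_]; apply: contra; apply/subsetP/chain_subset; lia. Qed.

Lemma layer_unique m1 m2 x : 0 < m1 <= t -> 0 < m2 <= t ->
  x \in V m1 :\: V m1.-1 -> x \in V m2 :\: V m2.-1 -> m1 = m2.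
Proof.
move=> m1t m2t /setDP[x1 x1'] /setDP[x2 x2'].
case: (ltngtP m1 m2) => // lt_m.
  by case/negP: x2'; apply: subsetP x1; apply: chain_subset; lia.
by case/negP: x1'; apply: subsetP x2; apply: chain_subset; lia.
Qed.

End Chain.

Section Spanning.
Variables (n sigma : nat) (e : rel 'I_n).
Hypotheses (e_simple : simple_graph e) (e_connected : connected_graph e).
Hypotheses (sigma_gt0 : 0 < sigma) (sigma_le_n : sigma <= n).
Local Notation S := (sources n sigma).

Fixpoint ball k : {set 'I_n} :=
  if k is k'.+1 then ball k' :|: [set u | [exists w in ball k', e u w]] else S.

Lemma in_some_ball u : exists k, u \in ball k.
Proof.
have n_gt0 : 0 < n by lia.
have /connectP[p e_p p_last] := e_connected u (Ordinal n_gt0).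
exists (size p); elim: p u e_p p_last => [|w p IH] u /=; first by move=> _ <-; rewrite inE.
move=> /andP[uw /IH w_ball /w_ball {}w_ball]; rewrite !inE; apply/orP; right.
by apply/existsP; exists w; rewrite w_ball.
Qed.

Definition dist u := ex_minn (in_some_ball u).

Lemma dist_ball u : u \in ball (dist u).
Proof. by rewrite /dist; case: ex_minnP. Qed.

Lemma dist_min u k : u \in ball k -> dist u <= k.
Proof. by rewrite /dist; case: ex_minnP => m _; apply. Qed.

Lemma closer_neighbor u : u \notin S -> exists w, e u w && (dist w < dist u).
Proof.
move=> uS; have := dist_ball u; case du: (dist u) => [|m] /=.
  by move=> uS'; rewrite uS' in uS.
rewrite inE => /orP[/dist_min|]; first by rewrite du ltnn.
rewrite inE => /existsP[w /andP[/dist_min wm uw]].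
by exists w; rewrite uw; lia.
Qed.

Definition parent u := odflt u [pick w | e u w && (dist w < dist u)].

Lemma parentP u : u \notin S -> e u (parent u) && (dist (parent u) < dist u).
Proof.
move=> /closer_neighbor[w uw]; rewrite /parent.
by case: pickP => [//|/(_ w)]; rewrite uw.
Qed.

Lemma parent_capacity v : preim_count sigma parent v + (v \notin S) <= deg e v.
Proof.
have [e_sym _] := e_simple.
have children_far : [set u | (u \notin S) && (parent u == v)] \subset
                    [set u | e v u && (dist v < dist u)].
  apply/subsetP => u; rewrite inE => /andP[uS /eqP <-]; rewrite inE.
  by have /andP[] := parentP uS; rewrite e_sym => -> ->.
apply: leq_trans (_ : #|[set u | e v u && (dist v < dist u)]| + (v \notin S) <= _).
  by rewrite leq_add2r subset_leq_card.
case: (boolP (v \in S)) => vS; rewrite /deg.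
  by rewrite addn0 subset_leq_card //; apply/subsetP => u; rewrite !inE => /andP[].
have /andP[v_par par_closer] := parentP vS.
rewrite (cardsD1 (parent v) [set u | e v u]) inE v_par addnC leq_add2l.
apply: subset_leq_card; apply/subsetP => u; rewrite !inE => /andP[-> far].
by rewrite andbT; apply: contraTneq far => ->; rewrite -leqNgt ltnW.
Qed.

Lemma exists_admissible t : exists Vs pi, admissible sigma t e Vs pi.
Proof.
exists (fun _ => S), parent; split => // [k _ v|k _ u v|]; rewrite ?setDv ?inE //.
exact: parent_capacity.
Qed.

End Spanning.

Section Reroute.
Variables (n sigma t : nat) (e : rel 'I_n).
Local Notation S := (sources n sigma).
Local Notation children p v := [set u | (u \notin S) && (p u == v)].

Variables (W : nat -> {set 'I_n}) (p : 'I_n -> 'I_n) (i j : 'I_n).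
Hypotheses (W0 : W 0 = S) (W_incr : forall k, 0 < k <= t -> W k.-1 \subset W k).
Hypothesis p_parent :
  forall k, 0 < k <= t -> forall v, v \in W k :\: S -> p v \in W k.-1.
Hypothesis p_inj : forall k, 0 < k <= t -> forall u v,
  u \in W k :\: W k.-1 -> v \in W k :\: W k.-1 -> p u = p v -> u = v.
Hypothesis i_adopts :
  forall k, 0 < k <= t -> forall u, u \in W k :\: S -> p u = j -> i \in W k.-1.
Hypothesis p_capacity :
  forall v, v != i -> v != j -> preim_count sigma p v + (v \notin S) <= deg e v.
Hypotheses (iS : i \notin S) (jS : j \notin S) (neq_ij : i != j).
Hypothesis load_i_lt_deg_j : preim_count sigma p i < deg e j.
Hypothesis load_ij :
  preim_count sigma p i + preim_count sigma p j + 2 <= deg e i + deg e j.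
Hypothesis deg_ji : deg e j <= deg e i.

Definition same_layer u w := [exists m : 'I_t.+1,
  [&& 0 < m, u \in W m :\: W m.-1 & w \in W m :\: W m.-1]].

Lemma same_layerP u w : reflect
  (exists2 m, 0 < m <= t & u \in W m :\: W m.-1 /\ w \in W m :\: W m.-1)
  (same_layer u w).
Proof.
apply: (iffP existsP) => [[m /and3P[m_gt0 um wm]]|[m mt [um wm]]].
  by exists m => //; move: (ltn_ord m) m_gt0; clear; lia.
have m_lt : m < t.+1 by move: mt; clear; lia.
by exists (Ordinal m_lt); rewrite /= um wm !andbT; case/andP: mt.
Qed.

Lemma same_layer_inj u u' w :
  same_layer u w -> same_layer u' w -> p u = p u' -> u = u'.
Proof.
move=> /same_layerP[m mt [um wm]] /same_layerP[m' m't [u'm' wm']].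
have eq_m := layer_unique W_incr mt m't wm wm'.
rewrite -eq_m in u'm'; exact: (p_inj mt um u'm').
Qed.

Lemma new_notin_sources m x : 0 < m <= t -> x \in W m :\: W m.-1 -> x \notin S.
Proof. by rewrite -W0; apply: new_notin_base. Qed.

(* Moving such a [u] to [i] would give [i] two children in one layer. *)
Definition shadowed := [set u | [exists w in children p i, same_layer u w]].

Lemma card_shadowed : #|children p j :&: shadowed| <= #|children p i|.
Proof.
pose partner w := odflt w [pick u | (u \in children p j) && same_layer u w].
apply: leq_trans (leq_imset_card partner (children p i)).
apply/subset_leq_card/subsetP => u; rewrite inE => /andP[uj].
rewrite inE => /existsP[w /andP[wi uw]]; apply/imsetP; exists w => //.
rewrite /partner; case: pickP => [u' /andP[u'j u'w]|/(_ u)]; last by rewrite uj uw.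
apply: same_layer_inj uw u'w _.
by move: uj u'j; rewrite !inE => /andP[_ /eqP->] /andP[_ /eqP->].
Qed.

Definition excess := preim_count sigma p j + 1 - deg e j.

Lemma excess_le_unshadowed : excess <= #|children p j :\: shadowed|.
Proof.
have := cardsID shadowed (children p j); have := card_shadowed.
have := load_i_lt_deg_j; rewrite /excess /preim_count; lia.
Qed.

Section Move.
Variable M : {set 'I_n}.
Hypotheses (M_unshadowed : M \subset children p j :\: shadowed).
Hypothesis card_M : #|M| = excess.

Definition rerouted u := if u \in M then i else p u.

Lemma M_children u : u \in M -> (u \notin S) && (p u == j).
Proof. by move/(subsetP M_unshadowed); rewrite !inE => /andP[_ /andP[-> ->]]. Qed.

Lemma rerouted_parent k : 0 < k <= t ->
  forall v, v \in W k :\: S -> rerouted v \in W k.-1.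
Proof.
move=> kt v vk; rewrite /rerouted; case: ifP => vM; last exact: p_parent.
by apply: (i_adopts kt vk); have /andP[_ /eqP] := M_children vM.
Qed.

Lemma rerouted_inj k : 0 < k <= t -> forall u v,
  u \in W k :\: W k.-1 -> v \in W k :\: W k.-1 -> rerouted u = rerouted v -> u = v.
Proof.
move=> kt.
have not_both u v : u \in M -> v \notin M ->
    u \in W k :\: W k.-1 -> v \in W k :\: W k.-1 -> i != p v.
  move=> uM vM uk vk; apply/eqP => i_pv.
  move/(subsetP M_unshadowed): uM; rewrite !inE => /andP[/negP[]]; apply/existsP.
  exists v; rewrite inE (new_notin_sources kt vk) -i_pv eqxx /=.
  by apply/same_layerP; exists k.
move=> u v uk vk; rewrite /rerouted.
case: ifPn => uM; case: ifPn => vM.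
- move=> _; apply: (p_inj kt uk vk).
  by have /andP[_ /eqP->] := M_children uM; have /andP[_ /eqP->] := M_children vM.
- by move/eqP; rewrite (negbTE (not_both _ _ uM vM uk vk)).
- by move/esym/eqP; rewrite (negbTE (not_both _ _ vM uM vk uk)).
- exact: (p_inj kt uk vk).
Qed.

Lemma children_rerouted_i : children rerouted i = children p i :|: M.
Proof.
apply/setP => u; rewrite /rerouted !inE; case: ifPn => uM; last by rewrite orbF.
by rewrite orbT eqxx andbT; have := M_children uM; rewrite !inE => /andP[].
Qed.

Lemma children_rerouted_j : children rerouted j = children p j :\: M.
Proof.
apply/setP => u; rewrite /rerouted !inE; case: ifPn => uM //=.
by rewrite (negbTE neq_ij) andbF.
Qed.

Lemma children_rerouted_other v :
  v != i -> v != j -> children rerouted v = children p v.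
Proof.
move=> vi vj; apply/setP => u; rewrite /rerouted !inE; case: ifPn => uM //.
have := M_children uM; rewrite !inE => /andP[_ /eqP->].
by rewrite ![_ == v]eq_sym (negbTE vi) (negbTE vj) !andbF.
Qed.

Lemma rerouted_capacity v :
  preim_count sigma rerouted v + (v \notin S) <= deg e v.
Proof.
case: (eqVneq v i) => [->|vi].
  rewrite /preim_count children_rerouted_i iS.
  rewrite cardsU card_M; have := deg_ji; have := load_i_lt_deg_j; have := load_ij.
  rewrite /excess /preim_count; lia.
case: (eqVneq v j) => [->|vj]; last first.
  by rewrite /preim_count children_rerouted_other //; apply: p_capacity.
have M_sub : M \subset children p j.
  by apply: subset_trans M_unshadowed (subsetDl _ _).
rewrite /preim_count children_rerouted_j cardsDS // jS card_M.
have := load_i_lt_deg_j; rewrite /excess /preim_count; lia.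
Qed.

End Move.

Lemma reroute_admissible : exists p', admissible sigma t e W p'.
Proof.
have /card_geqP[s [uniq_s size_s s_sub]] := excess_le_unshadowed.
pose M := [set u in s].
have M_sub : M \subset children p j :\: shadowed.
  by apply/subsetP => u; rewrite inE => /s_sub.
have card_M : #|M| = excess by rewrite cardsE (card_uniqP uniq_s).
exists (rerouted M); split => //.
- exact: rerouted_parent.
- exact: rerouted_inj M_sub.
- exact: rerouted_capacity.
Qed.

End Reroute.

Section TpermPreim.
Variables (T : finType) (i j : T) (A : {set T}).

Lemma preim_tperm_id : (i \in A) = (j \in A) -> tperm i j @^-1: A = A.
Proof. by move=> ij_A; apply/setP => x; rewrite inE; case: tpermP => [->|->|]. Qed.

Lemma preim_tperm_swap : i \notin A -> j \in A -> tperm i j @^-1: A = i |: (A :\ j).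
Proof.
move=> iA jA; apply/setP => x; rewrite !inE.
have ji : j != i by apply: contraNneq iA => <-.
case: tpermP => [->|->|/eqP xi /eqP xj]; first by rewrite jA eqxx.
  by rewrite (negbTE ji) (negbTE iA) eqxx.
by rewrite (negbTE xi) xj.
Qed.

End TpermPreim.

Definition weight n (A : {set 'I_n}) : nat := \sum_(x in A) x.

Definition pot n t (V : nat -> {set 'I_n}) : nat := \sum_(m < t.+1) weight (V m).

Section TpermWeight.
Variables (n : nat) (i j : 'I_n) (A : {set 'I_n}).
Hypothesis lt_ij : i < j.

Lemma weight_preim_tperm_lt :
  i \notin A -> j \in A -> weight (tperm i j @^-1: A) < weight A.
Proof.
move=> iA jA; rewrite preim_tperm_swap // /weight big_setU1 ?inE ?(negbTE iA) ?andbF //=.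
by rewrite [X in _ < X](big_setD1 j jA) ltn_add2r.
Qed.

Lemma weight_preim_tperm_le :
  (i \in A -> j \in A) -> weight (tperm i j @^-1: A) <= weight A.
Proof.
move=> ij_A; case: (boolP (j \in A)) => jA.
  case: (boolP (i \in A)) => iA; first by rewrite preim_tperm_id ?iA ?jA.
  exact/ltnW/weight_preim_tperm_lt.
have iA : i \notin A := contraNN ij_A jA.
by rewrite preim_tperm_id // (negbTE iA) (negbTE jA).
Qed.

End TpermWeight.

Lemma admissible_subset n sigma t (e : rel 'I_n) V pi a b :
  admissible sigma t e V pi -> a <= b <= t -> V a \subset V b.
Proof. by case=> _ V_incr _ _ _; apply: chain_subset. Qed.

Lemma admissible_new_notin_sources n sigma t (e : rel 'I_n) V pi k x :
  admissible sigma t e V pi -> 0 < k <= t -> x \in V k :\: V k.-1 ->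
  x \notin sources n sigma.
Proof. by case=> V0 V_incr _ _ _; rewrite -V0; apply: new_notin_base. Qed.

Section Swap.
Variables (n sigma t : nat) (e : rel 'I_n).
Variables (V : nat -> {set 'I_n}) (pi : 'I_n -> 'I_n) (k : nat) (i j : 'I_n).
Local Notation S := (sources n sigma).
Local Notation sw := (tperm i j).
Hypotheses (V_adm : admissible sigma t e V pi) (k_range : 0 < k <= t).
Hypotheses (i_new : i \in V k :\: V k.-1) (j_old : j \in V k.-1).
Hypotheses (lt_ij : i < j) (deg_ji : deg e j <= deg e i).

Definition swapped m := sw @^-1: V m.

Lemma i_notin_sources : i \notin S.
Proof. exact: admissible_new_notin_sources V_adm k_range i_new. Qed.

Lemma j_notin_sources : j \notin S.
Proof. by move: i_notin_sources; rewrite !inE; lia. Qed.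

Lemma mem_tperm_sources x : (sw x \in S) = (x \in S).
Proof.
by case: tpermP => [->|->|//]; rewrite (negbTE i_notin_sources) (negbTE j_notin_sources).
Qed.

Lemma j_mem_of_i m : m <= t -> i \in V m -> j \in V m.
Proof.
move=> mt iV; case: (leqP k m) => km.
  by apply: subsetP j_old; apply: admissible_subset V_adm _; lia.
case/setDP: i_new => _ /negP[]; apply: subsetP iV.
by apply: admissible_subset V_adm _; lia.
Qed.

Lemma preim_count_conj v :
  preim_count sigma (sw \o pi \o sw) v = preim_count sigma pi (sw v).
Proof.
rewrite /preim_count -(card_preimset _ (@perm_inj _ sw)); apply: eq_card => u.
rewrite inE [sw u \in _]inE mem_tperm_sources [in RHS]in_set /= tpermK.
by rewrite -(inj_eq (@perm_inj _ sw)) tpermK.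
Qed.

Lemma swapped_admissible : exists p, admissible sigma t e swapped p.
Proof.
case: V_adm => V0 V_incr pi_parent pi_inj pi_capacity.
have in_sw m x : (x \in swapped m) = (sw x \in V m) by rewrite inE.
apply: (@reroute_admissible n sigma t e swapped (sw \o pi \o sw) i j).
- by apply/setP => x; rewrite in_sw V0 mem_tperm_sources.
- by move=> m mt; apply/subsetP => x; rewrite !in_sw; apply/subsetP/V_incr.
- move=> m mt v /setDP[vm vS]; rewrite in_sw /= tpermK.
  by apply: (pi_parent _ mt); rewrite inE mem_tperm_sources vS -in_sw.
- move=> m mt u v /setDP[um um'] /setDP[vm vm'] /perm_inj eq_pi.
  by apply/perm_inj/(pi_inj _ mt _ _ _ _ eq_pi); rewrite inE -!in_sw ?um' ?um ?vm' ?vm.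
- (* a child of j after the swap was a child of i, so it lies above layer k *)
- move=> m mt u /setDP[um uS] /= /(congr1 sw); rewrite tpermK tpermR => pi_u.
  have : pi (sw u) \in V m.-1.
    by apply: (pi_parent _ mt); rewrite inE mem_tperm_sources uS -in_sw.
  by rewrite pi_u in_sw tpermL => /j_mem_of_i; apply; lia.
- by move=> v vi vj; rewrite preim_count_conj tpermD 1?eq_sym //; apply: pi_capacity.
- exact: i_notin_sources.
- exact: j_notin_sources.
- by rewrite neq_ltn lt_ij.
- by rewrite preim_count_conj tpermL; have := pi_capacity j; rewrite j_notin_sources addn1.
- rewrite !preim_count_conj tpermL tpermR.
  have := pi_capacity i; have := pi_capacity j.
  by rewrite i_notin_sources j_notin_sources; lia.
- exact: deg_ji.
Qed.

Lemma card_swapped : #|swapped t| = #|V t|.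
Proof. exact/card_preimset/perm_inj. Qed.

Lemma pot_swapped : pot t swapped < pot t V.
Proof.
have k'_lt : k.-1 < t.+1 by lia.
rewrite /pot (bigD1 (Ordinal k'_lt)) // [X in _ < X](bigD1 (Ordinal k'_lt)) //=.
rewrite -addSn; apply: leq_add.
  by case/setDP: i_new => _ iV; apply: weight_preim_tperm_lt.
apply: leq_sum => m _; apply: weight_preim_tperm_le lt_ij _.
by apply: j_mem_of_i; rewrite -ltnS.
Qed.

End Swap.

Lemma ex_admissible_card_max n sigma t (e : rel 'I_n) V pi :
  admissible sigma t e V pi ->
  exists2 x : (nat -> {set 'I_n}) * ('I_n -> 'I_n), admissible sigma t e x.1 x.2 &
    forall Ws rho, admissible sigma t e Ws rho -> #|Ws t| <= #|x.1 t|.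
Proof.
move=> adm.
pose P (x : (nat -> {set 'I_n}) * ('I_n -> 'I_n)) := admissible sigma t e x.1 x.2.
have [[Vm pim] adm_m max_m] :=
  ex_argmin (P := P) (fun x => n - #|x.1 t|) (ex_intro P (V, pi) adm).
exists (Vm, pim) => // Ws rho /(max_m (Ws, rho)).
by have := max_card (Ws t); rewrite card_ord /=; lia.
Qed.

Theorem lemma1 (n sigma t : nat) (e : rel 'I_n)
  (He : simple_graph e) (Hconn : connected_graph e)
  (Hsigma : 1 <= sigma) (Hsn : sigma <= n)
  (Hord : forall i j : 'I_n, sigma <= i -> i <= j -> deg e j <= deg e i) :
  exists (Vs : nat -> {set 'I_n}) (pi : 'I_n -> 'I_n),
    [/\ admissible sigma t e Vs pi,
        layered t Vs &
        forall (Ws : nat -> {set 'I_n}) (rho : 'I_n -> 'I_n),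
          admissible sigma t e Ws rho -> #|Ws t| <= #|Vs t| ].
Proof.
have [V0 [pi0 adm0]] := exists_admissible He Hconn Hsigma Hsn t.
have [[Vm pim] /= adm_m max_m] := ex_admissible_card_max adm0.
pose optimal (x : (nat -> {set 'I_n}) * ('I_n -> 'I_n)) :=
  admissible sigma t e x.1 x.2 /\ #|x.1 t| = #|Vm t|.
have [[Vs pi] [/= adm card_Vs] min_pot] :=
  ex_argmin (fun x => pot t x.1) (ex_intro optimal (Vm, pim) (conj adm_m erefl)).
exists Vs, pi; split => //; last by move=> Ws rho /max_m; rewrite card_Vs.
move=> k kt i j i_new j_old; rewrite ltnNge; apply/negP => le_ij.
have lt_ij : i < j.
  rewrite ltn_neqAle le_ij andbT.
  by apply: contraTneq i_new => /val_inj ->; rewrite inE j_old.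
have deg_ji : deg e j <= deg e i.
  apply: (Hord i j _ le_ij).
  by have := admissible_new_notin_sources adm kt i_new; rewrite inE -leqNgt.
have [p adm_sw] := swapped_admissible adm kt i_new j_old lt_ij deg_ji.
have card_sw : #|swapped Vs i j t| = #|Vm t| by rewrite card_swapped.
have := min_pot (swapped Vs i j, p) (conj adm_sw card_sw).
by rewrite leqNgt (pot_swapped adm kt i_new j_old lt_ij deg_ji).
Qed.
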